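(* Let $A=\begin{bmatrix}a&b\\c&d\end{bmatrix}$ be a real $2\times2$ matrix with two distinct real standard eigenvalues, at least one of which, $\lambda_A$, is an interior L-eigenvalue of $A$, and suppose $\lambda_A\neq a$. Then for every $\varepsilon>0$ there is $\delta>0$ such that every real $2\times 2$ matrix $B$ with $\|B-A\|_F<\delta$ has an interior L-eigenvalue $\lambda_B$ with $|\lambda_A-\lambda_B|<\varepsilon$.
   Context: $\|\cdot\|_F$ is the Frobenius norm. Lorentz cone $\mathcal{K}=\{(x_1,x_2)^T:|x_1|\le x_2\}$; a real $\lambda$ is an L-eigenvalue of $A$ if there is a nonzero $x\in\mathcal{K}$ with $(A-\lambda I)x\in\mathcal{K}$ and $x^T(A-\lambda I)x=0$; it is an interior L-eigenvalue if such $x$ can be taken in the interior of $\mathcal{K}$. Standard eigenvalues are roots of the characteristic polynomial. *)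

From HB Require Import structures.
From mathcomp Require Import all_boot all_order all_algebra.
From mathcomp Require Import reals.
Set Implicit Arguments. Unset Strict Implicit. Unset Printing Implicit Defensive.
Import Order.TTheory GRing.Theory Num.Theory.
Local Open Scope ring_scope.

(* Index 0 = first coordinate x_1, index 1 = second coordinate x_2. *)

Definition lorentz {R : realType} (x : 'cV[R]_2) : bool :=
  `|x 0 0| <= x 1 0.

Definition lorentz_int {R : realType} (x : 'cV[R]_2) : bool :=
  `|x 0 0| < x 1 0.

Definition frob {R : realType} (M : 'M[R]_2) : R :=
  Num.sqrt (\sum_(i < 2) \sum_(j < 2) M i j ^+ 2).

Definition L_eig_vec {R : realType} (A : 'M[R]_2) (lam : R) (x : 'cV[R]_2) : Prop :=
  x != 0 /\ lorentz x /\ lorentz ((A - lam%:M) *m x) /\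
  ((x^T *m (A - lam%:M) *m x) 0 0 = 0).

Definition is_L_eig {R : realType} (A : 'M[R]_2) (lam : R) : Prop :=
  exists x : 'cV[R]_2, L_eig_vec A lam x.

Definition is_interior_L_eig {R : realType} (A : 'M[R]_2) (lam : R) : Prop :=
  exists x : 'cV[R]_2, L_eig_vec A lam x /\ lorentz_int x.

Definition is_std_eig {R : realType} (A : 'M[R]_2) (lam : R) : Prop :=
  root (char_poly A) lam.

(* An L-eigenvector x of lamA pairs to zero with (A - lamA) x, which lies in the
   cone; when x is interior this forces (A - lamA) x = 0, so interior
   L-eigenvalues are exactly the eigenvalues with an eigenvector inside the
   cone. Since lamA <> a, x is a multiple t (b, lamA - a) of the explicit
   eigenvector (B01, lam - B00). Because the eigenvalues of A are distinct,
   lamA = (a + d + u sqrt(disc A)) / 2 for a fixed sign u, and this root formula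
   is Lipschitz near A; so lamB = (tr B + u sqrt(disc B)) / 2 with eigenvector
   t (B01, lamB - B00) stays close to (lamA, x), hence inside the open cone. *)

From HB Require Import structures.
From mathcomp Require Import all_boot all_order all_algebra.
From mathcomp Require Import reals.
From mathcomp Require Import ring lra.
Set Implicit Arguments. Unset Strict Implicit. Unset Printing Implicit Defensive.
Import Order.TTheory GRing.Theory Num.Theory.
Local Open Scope ring_scope.

Lemma lift0_ord2 : lift ord0 ord0 = 1 :> 'I_2. Proof. exact: val_inj. Qed.
Lemma lift1_ord2 : lift 1 ord0 = 0 :> 'I_2. Proof. exact: val_inj. Qed.

Section Mx2.
Variable R : comNzRingType.
Implicit Types (A : 'M[R]_2) (x y : 'cV[R]_2).

Lemma mulmx_col2 A x i : (A *m x) i 0 = A i 0 * x 0 0 + A i 1 * x 1 0.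
Proof. by rewrite mxE !big_ord_recl big_ord0 addr0 lift0_ord2. Qed.

Lemma dotmx_col2 x y : (x^T *m y) 0 0 = x 0 0 * y 0 0 + x 1 0 * y 1 0.
Proof. by rewrite mxE !big_ord_recl big_ord0 addr0 !mxE lift0_ord2. Qed.

Lemma col2P x y : x 0 0 = y 0 0 -> x 1 0 = y 1 0 -> x = y.
Proof.
move=> e0 e1; apply/matrixP => i j; rewrite (ord1 j).
have [->|->] : i = 0 \/ i = 1 by case: i => [[|[|//]]] ?; [left | right]; apply: val_inj.
  exact: e0.
exact: e1.
Qed.

Lemma horner_char_poly2 A l :
  (char_poly A).[l] = (l - A 0 0) * (l - A 1 1) - A 0 1 * A 1 0.
Proof.
rewrite /char_poly /char_poly_mx (expand_det_row _ 0) !big_ord_recl big_ord0.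
rewrite /cofactor !det_mx11 !mxE /= lift0_ord2 lift1_ord2 !hornerE /=.
by have -> : ord0 = 0 :> 'I_2 by []; ring.
Qed.

Definition disc2 A := (A 0 0 - A 1 1) ^+ 2 + 4 * A 0 1 * A 1 0.

Lemma horner_char_poly2_sqr A l :
  4 * (char_poly A).[l] = (2 * l - (A 0 0 + A 1 1)) ^+ 2 - disc2 A.
Proof. by rewrite horner_char_poly2 /disc2; ring. Qed.

Definition eigvec2 A l : 'cV[R]_2 :=
  \matrix_(i, j) if i == 0 then A 0 1 else l - A 0 0.

Lemma eigvec2_root A l :
  root (char_poly A) l -> (A - l%:M) *m eigvec2 A l = 0.
Proof.
rewrite /root horner_char_poly2 => /eqP Al0.
apply: col2P; rewrite mulmx_col2 !mxE /=; first by ring.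
by rewrite -[RHS]oppr0 -Al0; ring.
Qed.

End Mx2.

Section Mx2Field.
Variable R : fieldType.
Implicit Types (A : 'M[R]_2) (x : 'cV[R]_2).

Lemma eigvec2_span A l x : l != A 0 0 -> (A - l%:M) *m x = 0 ->
  x = (x 1 0 / (l - A 0 0)) *: eigvec2 A l.
Proof.
move=> lA Ax0; have la0 : l - A 0 0 != 0 by rewrite subr_eq0.
have := congr1 (fun y : 'cV[R]_2 => y 0 0) Ax0.
rewrite mulmx_col2 !mxE /= => row0.
apply: col2P; rewrite !mxE /=; last by rewrite divfK.
apply: (mulIf la0); rewrite mulrAC divfK //.
by rewrite -[RHS]subr0 -row0; ring.
Qed.
End Mx2Field.

Lemma sqrtr_dist_le (R : rcfType) (x y : R) :
  0 <= y -> `|Num.sqrt x - Num.sqrt y| * Num.sqrt y <= `|x - y|.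
Proof.
move=> y_ge0; have sy_ge0 := sqrtr_ge0 y.
have [x_ge0 | x_lt0] := leP 0 x.
  have -> : x - y = (Num.sqrt x - Num.sqrt y) * (Num.sqrt x + Num.sqrt y).
    by rewrite -subr_sqr !sqr_sqrtr.
  rewrite normrM (ger0_norm (addr_ge0 (sqrtr_ge0 x) sy_ge0)).
  by apply: ler_wpM2l; rewrite ?normr_ge0 // lerDr sqrtr_ge0.
rewrite ltr0_sqrtr // sub0r normrN ger0_norm // -expr2 sqr_sqrtr //.
rewrite ler0_norm; lra.
Qed.

Section LorentzEigen.
Variable R : realType.
Implicit Types (A B : 'M[R]_2) (x y : 'cV[R]_2) (l u : R).

Lemma lorentz_int_orth_eq0 x y :
  lorentz_int x -> lorentz y -> (x^T *m y) 0 0 = 0 -> y = 0.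
Proof.
rewrite /lorentz_int /lorentz dotmx_col2 => x_int y_cone xy0.
have xy_le : - (x 0 0 * y 0 0) <= `|x 0 0| * y 1 0.
  apply: le_trans (ler_norm _) _; rewrite normrN normrM.
  by apply: ler_wpM2l.
have y1_0 : y 1 0 = 0 by have := normr_ge0 (x 0 0); have := normr_ge0 (y 0 0); nra.
apply: col2P; rewrite mxE; last exact: y1_0.
by apply/normr0_eq0/le_anti; rewrite normr_ge0 andbT -y1_0.
Qed.

Lemma interior_L_eig_vecP A l x :
  lorentz_int x -> L_eig_vec A l x <-> (A - l%:M) *m x = 0.
Proof.
move=> x_int; split => [[_ [_ [y_cone xy0]]] | Ax0].
  by apply: lorentz_int_orth_eq0 x_int y_cone _; rewrite mulmxA.
split.
  apply/eqP => x0; move: x_int; rewrite /lorentz_int x0 !mxE normr0; lra.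
split; first exact: ltW.
by rewrite /lorentz -mulmxA Ax0 mulmx0 !mxE normr0.
Qed.

Lemma lorentz_int_near x y :
  `|y 0 0 - x 0 0| + `|y 1 0 - x 1 0| < x 1 0 - `|x 0 0| -> lorentz_int y.
Proof.
rewrite /lorentz_int => near.
have := ler_normD (x 0 0) (y 0 0 - x 0 0); rewrite subrKC.
have := ler_norm (- (y 1 0 - x 1 0)); rewrite normrN.
lra.
Qed.

Lemma normr_entry_le_frob A i j : `|A i j| <= frob A.
Proof.
rewrite /frob -sqrtr_sqr ler_sqrt; last first.
  by apply: sumr_ge0 => k _; apply: sumr_ge0 => m _; apply: sqr_ge0.
rewrite (bigD1 i) //= (bigD1 j) //= -addrA lerDl.
apply: addr_ge0; first by apply: sumr_ge0 => m _; apply: sqr_ge0.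
by apply: sumr_ge0 => k _; apply: sumr_ge0 => m _; apply: sqr_ge0.
Qed.

Lemma root_char_poly2 A l :
  root (char_poly A) l = ((2 * l - (A 0 0 + A 1 1)) ^+ 2 == disc2 A).
Proof.
by rewrite -subr_eq0 -horner_char_poly2_sqr mulf_eq0 pnatr_eq0.
Qed.

Lemma char_poly2_root_neq A l mu :
  root (char_poly A) l -> root (char_poly A) mu -> mu != l ->
  2 * l - (A 0 0 + A 1 1) != 0.
Proof.
rewrite !root_char_poly2 => /eqP dl /eqP dmu; apply: contra => /eqP e0.
move: dmu; rewrite -dl e0 expr0n /= => /eqP; rewrite sqrf_eq0 => /eqP m0.
by apply/eqP; lra.
Qed.

Definition eig2 u A := (A 0 0 + A 1 1 + u * Num.sqrt (disc2 A)) / 2.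

Lemma root_eig2 u A : `|u| = 1 -> 0 <= disc2 A -> root (char_poly A) (eig2 u A).
Proof.
move=> u1 dA; rewrite root_char_poly2.
have -> : 2 * eig2 u A - (A 0 0 + A 1 1) = u * Num.sqrt (disc2 A).
  by rewrite /eig2; field.
by rewrite exprMn -real_normK ?num_real // u1 expr1n mul1r sqr_sqrtr.
Qed.

Lemma eig2_sg A l :
  root (char_poly A) l -> eig2 (Num.sg (2 * l - (A 0 0 + A 1 1))) A = l.
Proof.
by rewrite root_char_poly2 /eig2 => /eqP <-; rewrite sqrtr_sqr -numEsg; field.
Qed.

Lemma disc2_lipschitz A B :
  `|disc2 B - disc2 A| <= 8 * frob (B - A) * (frob (B - A) + 2 * frob A).
Proof.
set f := frob (B - A); set F := frob A.
have f_ge0 : 0 <= f by apply: sqrtr_ge0.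
have dB i j : `|B i j - A i j| <= f.
  by have := normr_entry_le_frob (B - A) i j; rewrite !mxE.
have nA i j : `|A i j| <= F by apply: normr_entry_le_frob.
have -> : disc2 B - disc2 A =
    ((B 0 0 - A 0 0) - (B 1 1 - A 1 1)) *
      ((B 0 0 - A 0 0) - (B 1 1 - A 1 1) + 2 * (A 0 0 - A 1 1)) +
    4 * (B 0 1 * (B 1 0 - A 1 0) + A 1 0 * (B 0 1 - A 0 1)).
  by rewrite /disc2; ring.
have pq : `|(B 0 0 - A 0 0) - (B 1 1 - A 1 1)| <= 2 * f.
  have := ler_normB (B 0 0 - A 0 0) (B 1 1 - A 1 1).
  by have := dB 0 0; have := dB 1 1; lra.
have ad : `|A 0 0 - A 1 1| <= 2 * F.
  by have := ler_normB (A 0 0) (A 1 1); have := nA 0 0; have := nA 1 1; lra.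
have t1 : `|((B 0 0 - A 0 0) - (B 1 1 - A 1 1)) *
      ((B 0 0 - A 0 0) - (B 1 1 - A 1 1) + 2 * (A 0 0 - A 1 1))| <=
    2 * f * (2 * f + 4 * F).
  rewrite normrM; apply: ler_pM => //.
  have := ler_normD ((B 0 0 - A 0 0) - (B 1 1 - A 1 1)) (2 * (A 0 0 - A 1 1)).
  by rewrite normrM ger0_norm //; lra.
have b1 : `|B 0 1| <= F + f.
  have := ler_normD (A 0 1) (B 0 1 - A 0 1); rewrite subrKC.
  by have := nA 0 1; have := dB 0 1; lra.
have t2 : `|B 0 1 * (B 1 0 - A 1 0) + A 1 0 * (B 0 1 - A 0 1)| <=
    (F + f) * f + F * f.
  apply: le_trans (ler_normD _ _) _; rewrite !normrM.
  by apply: lerD; apply: ler_pM.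
have -> : 8 * f * (f + 2 * F) = 2 * f * (2 * f + 4 * F) + 4 * ((F + f) * f + F * f).
  by ring.
apply: le_trans (ler_normD _ _) _; rewrite (normrM 4) ger0_norm //.
by apply: lerD => //; apply: ler_wpM2l.
Qed.

Lemma eig2_lipschitz u A B : `|u| = 1 -> 0 < disc2 A ->
  `|eig2 u B - eig2 u A| <=
    frob (B - A) * (1 + 4 * (frob (B - A) + 2 * frob A) / Num.sqrt (disc2 A)).
Proof.
move=> u1 dA; set f := frob (B - A); set F := frob A; set sA := Num.sqrt (disc2 A).
have sA_gt0 : 0 < sA by rewrite sqrtr_gt0.
have dB i j : `|B i j - A i j| <= f.
  by have := normr_entry_le_frob (B - A) i j; rewrite !mxE.
have dsqrt : `|Num.sqrt (disc2 B) - sA| <= 8 * f * (f + 2 * F) / sA.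
  rewrite ler_pdivlMr //; apply: le_trans (disc2_lipschitz A B).
  exact: sqrtr_dist_le (ltW dA).
have -> : eig2 u B - eig2 u A =
    ((B 0 0 - A 0 0) + (B 1 1 - A 1 1) + u * (Num.sqrt (disc2 B) - sA)) / 2.
  by rewrite /eig2 -/sA; ring.
rewrite normrM normfV (ger0_norm (_ : (0:R) <= 2)) // ler_pdivrMr //.
apply: le_trans (ler_normD _ _) _; rewrite normrM u1 mul1r.
have := ler_normD (B 0 0 - A 0 0) (B 1 1 - A 1 1).
have -> : f * (1 + 4 * (f + 2 * F) / sA) * 2 = 2 * f + 8 * f * (f + 2 * F) / sA.
  by ring.
have := dB 0 0; have := dB 1 1; lra.
Qed.

Lemma eig2_near u A : `|u| = 1 -> 0 < disc2 A ->
  forall eta, 0 < eta -> exists2 delta, 0 < delta &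
    forall B, frob (B - A) < delta -> 0 <= disc2 B /\ `|eig2 u B - eig2 u A| < eta.
Proof.
move=> u1 dA eta eta_gt0; set F := frob A; set sA := Num.sqrt (disc2 A).
have sA_gt0 : 0 < sA by rewrite sqrtr_gt0.
have F_ge0 : 0 <= F by apply: sqrtr_ge0.
pose M := 1 + 2 * F; have M_gt0 : 0 < M by rewrite /M; lra.
pose C := 1 + 4 * M / sA.
have C_gt0 : 0 < C.
  by rewrite /C; have := divr_gt0 (mulr_gt0 (ltr0n _ 4) M_gt0) sA_gt0; lra.
exists (Num.min 1 (Num.min (disc2 A / (8 * M)) (eta / C))).
  by rewrite !lt_min ltr01 !divr_gt0 ?mulr_gt0.
move=> B; set f := frob (B - A); rewrite !lt_min => /and3P [f_lt1 f_disc f_eta].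
rewrite ltr_pdivlMr ?mulr_gt0 // in f_disc; rewrite ltr_pdivlMr // in f_eta.
have f_ge0 : 0 <= f by apply: sqrtr_ge0.
have fM : f + 2 * F <= M by rewrite /M; lra.
split.
  have := disc2_lipschitz A B; rewrite -/f -/F.
  have : 8 * f * (f + 2 * F) <= 8 * f * M by apply: ler_wpM2l; rewrite ?mulr_ge0.
  have := ler_norm (- (disc2 B - disc2 A)); rewrite normrN.
  lra.
apply: le_lt_trans (eig2_lipschitz B u1 dA) _; rewrite -/f -/F -/sA.
apply: (le_lt_trans _ f_eta); apply: ler_wpM2l => //.
rewrite /C lerD2l; apply: ler_wpM2r; first by rewrite invr_ge0 ltW.
by apply: ler_wpM2l.
Qed.

Lemma eigvec2_scale_dist t A B l l' :
  `|(t *: eigvec2 B l') 0 0 - (t *: eigvec2 A l) 0 0| +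
  `|(t *: eigvec2 B l') 1 0 - (t *: eigvec2 A l) 1 0| <=
    `|t| * (2 * frob (B - A) + `|l' - l|).
Proof.
rewrite !mxE /= -!mulrBr !normrM -mulrDr; apply: ler_wpM2l => //.
have dB i j : `|B i j - A i j| <= frob (B - A).
  by have := normr_entry_le_frob (B - A) i j; rewrite !mxE.
have := ler_normB (l' - l) (B 0 0 - A 0 0).
have -> : l' - l - (B 0 0 - A 0 0) = l' - B 0 0 - (l - A 0 0) by ring.
by have := dB 0 0; have := dB 0 1; lra.
Qed.

End LorentzEigen.

Theorem lemma4p6 (R : realType) (A : 'M[R]_2) (lamA : R) :
  (exists mu : R, is_std_eig A mu /\ mu != lamA) ->
  is_std_eig A lamA ->
  is_interior_L_eig A lamA ->
  lamA != A 0 0 ->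
  forall eps : R, 0 < eps ->
  exists delta : R, 0 < delta /\
    forall B : 'M[R]_2, frob (B - A) < delta ->
      exists lamB : R, is_interior_L_eig B lamB /\ `|lamA - lamB| < eps.
Proof.
move=> [mu [Amu mu_neq]] AlamA [x [Lx x_int]] lamA_neq eps eps_gt0.
have Ax0 := (interior_L_eig_vecP A lamA x_int).1 Lx.
have e_neq0 := char_poly2_root_neq AlamA Amu mu_neq.
set u := Num.sg (2 * lamA - (A 0 0 + A 1 1)).
have u1 : `|u| = 1 by rewrite normr_sg e_neq0.
have discA : 0 < disc2 A.
  by move: AlamA; rewrite /is_std_eig root_char_poly2 => /eqP <-; rewrite exprn_even_gt0.
have lamAE : eig2 u A = lamA by apply: eig2_sg.
set t := x 1 0 / (lamA - A 0 0).
have xE : t *: eigvec2 A lamA = x by rewrite [RHS](eigvec2_span lamA_neq Ax0).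
have g_gt0 : 0 < x 1 0 - `|x 0 0| by rewrite subr_gt0.
(* eta keeps |t| (2 frob (B - A) + |lamB - lamA|) below the margin x1 - |x0|. *)
pose eta := Num.min eps ((x 1 0 - `|x 0 0|) / (3 * `|t| + 1)).
have t_ge0 := normr_ge0 t.
have eta_gt0 : 0 < eta by rewrite lt_min eps_gt0 divr_gt0 //; lra.
have [d0 d0_gt0 near] := eig2_near u1 discA eta_gt0.
exists (Num.min d0 eta); split=> [|B]; first by rewrite lt_min d0_gt0.
rewrite lt_min => /andP [f_d0 f_eta]; have [discB dlam] := near B f_d0.
exists (eig2 u B); rewrite lamAE in dlam; split; last first.
  by rewrite distrC; apply: (lt_le_trans dlam); rewrite ge_min lexx.
set v := t *: eigvec2 B (eig2 u B).
have v_int : lorentz_int v.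
  apply: (lorentz_int_near (x := x)); rewrite -{1 2}xE.
  apply: le_lt_trans (eigvec2_scale_dist _ _ _ _ _) _.
  have : eta * (3 * `|t| + 1) <= x 1 0 - `|x 0 0|.
    by rewrite -ler_pdivlMr ?ge_min ?lexx ?orbT //; lra.
  nra.
exists v; split=> //; apply/(interior_L_eig_vecP _ _ v_int).
by rewrite -scalemxAr eigvec2_root ?scaler0 // root_eig2.
Qed.
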